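(* Let $G=(V,E)$ be a directed graph, $s\neq t$ vertices and $k\ge 5$ an integer. For each $w\in D$ let $\widehat{In}_D(w)$ be any subset of $In_D(w)$ of size $k-2$ if $|In_D(w)|>k-2$, and $\widehat{In}_D(w)=In_D(w)$ otherwise. Let $e(u,v)$ be an undetermined edge. Then $e(u,v)$ is an edge of $SPG_k(s,t)$ if and only if there exist an integer $l$ and vertices $v_2,\dots,v_{l-2}$ forming a simple path $q^*$ in $G$ of length $l-4\le k-4$ having $e(u,v)$ as one of its edges, such that (1) $v_2\in D$ and $v_{l-2}\in A$; and (2) there exist $v_1\in \widehat{In}_D(v_2)$ and $v_{l-1}\in Out_A(v_{l-2})$ such that $s,v_1,v_2,\dots,v_{l-1},t$ are pairwise distinct.
   Context: A path from $x$ to $y$ in $G$ is a vertex sequence $x=v_0,\dots,v_m=y$ with $(v_{i-1},v_i)\in E$; its length is $m$ and $V(p)$, $E(p)$ are its vertex and edge sets. A simple path has no repeated vertex. $SPG_k(s,t)$ is the subgraph of $G$ formed by the union of vertex sets and edge sets of all simple paths from $s$ to $t$ of length at most $k$. For a vertex $u$ and integer $l\ge 0$, $EV^*_l(s,u)$ exists iff there is at least one simple path from $s$ to $u$ of length at most $l$ not containing $t$, and then $EV^*_l(s,u)$ is the intersection of $V(p)$ over all such paths. Symmetrically, $EV^*_l(v,t)$ exists iff there is at least one simple path from $v$ to $t$ of length at most $l$ not containing $s$, and then it is the intersection of $V(p)$ over all such paths. The upper-bound graph $SPG^u_k(s,t)$ is the subgraph of $G$ whose edges are exactly those $e(u,v)\in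 E$ for which there exist integers $k_f,k_b\ge 0$ with $EV^*_{k_f}(s,u)$ and $EV^*_{k_b}(v,t)$ existing, $k_f+1+k_b\le k$, and $EV^*_{k_f}(s,u)\cap EV^*_{k_b}(v,t)=\emptyset$. An edge $e(u,v)\in E$ is definite if one of: (a) $u=s$ and $EV^*_{k-1}(v,t)$ exists; (b) $v=t$ and $EV^*_{k-1}(s,u)$ exists; (c) $EV^*_1(s,u)$ and $EV^*_{k-2}(v,t)$ exist and $u\notin EV^*_{k-2}(v,t)$; (d) $EV^*_1(v,t)$ and $EV^*_{k-2}(s,u)$ exist and $v\notin EV^*_{k-2}(s,u)$. An undetermined edge is an edge of $SPG^u_k(s,t)$ that is not definite. The departure set $D$ consists of vertices $w$ having an in-neighbour $x$ such that $x,w,s,t$ are pairwise distinct and $e(s,x),e(x,w)$ are edges of $SPG^u_k(s,t)$; for $w\in D$, $In_D(w)$ is the set of all such $x$. The arrival set $A$ consists of vertices $w$ having an out-neighbour $y$ such that $w,y,s,t$ are pairwise distinct and $e(w,y),e(y,t)$ are edges of $SPG^u_k(s,t)$; for $w\in A$, $Out_A(w)$ is the set of all such $y$. *)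

From mathcomp Require Import all_boot.
From mathcomp Require Import boolp.
Set Implicit Arguments. Unset Strict Implicit. Unset Printing Implicit Defensive.

(* A path x = v_0, ..., v_m = y is represented by the sequence x :: p with
   path E x p and last x p = y; its length is size p; V(p) = x :: p and
   its edges are the consecutive pairs of x :: p. *)

Section Defs.
Variables (T : finType) (E : rel T).

Definition spath (x y : T) (p : seq T) : bool :=
  [&& path E x p, last x p == y & uniq (x :: p)].

Definition sp_le (avoid : T) (l : nat) (x y : T) (p : seq T) : Prop :=
  [/\ spath x y p, size p <= l & avoid \notin x :: p].

Definition EV_ex (avoid : T) (l : nat) (x y : T) : Prop :=
  exists p, sp_le avoid l x y p.

(* w belongs to EV*_l(x,y): w lies on every such path *)
Definition EV_mem (avoid : T) (l : nat) (x y w : T) : Prop :=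
  forall p, sp_le avoid l x y p -> w \in x :: p.

Variables (s t : T) (k : nat).

Definition EVf_ex l u := EV_ex t l s u.
Definition EVf_mem l u w := EV_mem t l s u w.
Definition EVb_ex l v := EV_ex s l v t.
Definition EVb_mem l v w := EV_mem s l v t w.

Definition SPG_edge (u v : T) : Prop :=
  exists p, [/\ spath s t p, size p <= k & infix [:: u; v] (s :: p)].

Definition SPGu_edge (u v : T) : Prop :=
  E u v /\ exists kf kb,
    [/\ EVf_ex kf u, EVb_ex kb v, kf + 1 + kb <= k &
        ~ exists w, EVf_mem kf u w /\ EVb_mem kb v w].

Definition definite_edge (u v : T) : Prop :=
  E u v /\
  [\/ u = s /\ EVb_ex k.-1 v,
      v = t /\ EVf_ex k.-1 u,
      [/\ EVf_ex 1 u, EVb_ex (k - 2) v & ~ EVb_mem (k - 2) v u]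
    | [/\ EVb_ex 1 v, EVf_ex (k - 2) u & ~ EVf_mem (k - 2) u v]].

Definition undetermined_edge (u v : T) : Prop :=
  SPGu_edge u v /\ ~ definite_edge u v.

Definition InD_rel (w x : T) : Prop :=
  E x w /\ uniq [:: x; w; s; t] /\ SPGu_edge s x /\ SPGu_edge x w.

Definition in_D (w : T) : Prop := exists x, InD_rel w x.

Definition InD (w : T) : {set T} := [set x | `[< InD_rel w x >]].

Definition OutA_rel (w y : T) : Prop :=
  E w y /\ uniq [:: w; y; s; t] /\ SPGu_edge w y /\ SPGu_edge y t.

Definition in_A (w : T) : Prop := exists y, OutA_rel w y.

Definition OutA (w : T) : {set T} := [set y | `[< OutA_rel w y >]].

End Defs.

From mathcomp Require Import all_boot.
From mathcomp Require Import boolp.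
From mathcomp Require Import zify.
Set Implicit Arguments. Unset Strict Implicit. Unset Printing Implicit Defensive.

(* Every edge of a simple s-t path p of length at most k lies in SPG^u_k(s,t):
   the parts of p before and after the edge are disjoint and witness the two
   EV* sets.  If the edge is within one step of s or t, those same parts show
   it is definite.  So an undetermined edge of p lies strictly inside a
   segment x, ..., w of p = s, a1, x, ..., w, b1, t, whence a1 is in In_D(x)
   and b1 in Out_A(w).  The truncation of In_D(x) is either In_D(x) itself,
   which contains a1, or has k - 2 elements, more than the vertices of p after
   x other than t; either way it contains a v1 off p, and replacing a1 by v1
   gives the required configuration.  Conversely such a configuration is a
   simple s-t path s, v1, x, ..., w, v_{l-1}, t of length at most k. *)

Lemma size_split_edge (T : Type) (x u v : T) p a b :
  x :: p = a ++ u :: v :: b -> size p = size a + 1 + size b.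
Proof. by move/(congr1 size); rewrite /= size_cat /=; lia. Qed.

Lemma uniq_move_head (T : eqType) (a b c d : T) :
  uniq [:: a; b; c; d] -> uniq [:: b; c; a; d].
Proof. by rewrite -(perm_uniq (permEl (perm_catCA [:: a] [:: b; c] [:: d]))). Qed.

Lemma uniq_replace_second (T : eqType) (x a y : T) l :
  uniq [:: x, a & l] -> y \notin x :: l -> uniq [:: x, y & l].
Proof.
rewrite /= !inE !negb_or => /and3P[/andP[_ x_l] _ ->] /andP[y_x ->].
by rewrite eq_sym y_x x_l.
Qed.

Definition trunc_subset (T : finType) (m : nat) (H I : {set T}) : Prop :=
  [/\ H \subset I, (m < #|I| -> #|H| = m) & (#|I| <= m -> H = I)].

Lemma trunc_subset_avoid (T : finType) m (H I : {set T}) (S : seq T) a :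
  trunc_subset m H I -> a \in I -> a \notin S -> size S < m ->
  exists2 b, b \in H & b \notin S.
Proof.
case=> _ big small a_I a_S lt_Sm; have [le_Im | lt_mI] := leqP #|I| m.
  by exists a; rewrite ?small.
have /subsetPn[b] : ~~ (H \subset S).
  apply: contraTN lt_Sm => /subset_leq_card; rewrite big // -leqNgt => le_mS.
  exact: leq_trans le_mS (card_size S).
by exists b.
Qed.

Section SimplePaths.
Variables (T : finType) (E : rel T).

Lemma spath_suffix x y (p a : seq T) z b :
  spath E x y p -> x :: p = a ++ z :: b -> spath E z y b.
Proof.
case/and3P=> Pp /eqP <- Up e; apply/and3P; split.
- case: a e Pp => [[<- ->] //|x' a [_ ->]].
  by rewrite cat_path => /andP[_ /andP[]].
- by case: a e => [[<- ->]|x' a [_ ->]] //; rewrite last_cat.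
- by move: Up; rewrite e cat_uniq => /and3P[].
Qed.

Lemma sp_le_suffix x y (p a : seq T) z b :
  spath E x y p -> x :: p = a ++ z :: b -> a != [::] -> sp_le E x (size b) z y b.
Proof.
move=> sp e a_nil; split=> //; first exact: spath_suffix sp e.
case/and3P: sp => _ _; rewrite e cat_uniq => /and3P[_ /hasPn x_out _].
case: a e a_nil x_out => [|x' a] //= [-> _] _ x_out.
by apply/negP => /x_out; rewrite inE eqxx.
Qed.

Lemma sp_le_prefix x y (p a : seq T) z b :
  spath E x y p -> x :: p = a ++ z :: b -> b != [::] ->
  exists q, [/\ rcons a z = x :: q, size q = size a & sp_le E y (size a) x z q].
Proof.
case/and3P=> Pp /eqP y_last Up e b_nil.
have y_b : y \in b.
  rewrite -y_last; case: a e => [|_ a] /= [_ ->]; rewrite ?last_cat;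
  by case: b b_nil => //= b0 b' _; rewrite mem_last.
have := Up; rewrite e -cat_rcons cat_uniq => /and3P[Ua /hasPn/(_ y y_b) y_out _].
case: a e Ua y_out => [|x' a] /= [<- e] Ua y_out.
  by exists [::]; split=> //; split; rewrite /spath //= eqxx.
exists (rcons a z); rewrite size_rcons; split=> //; split; rewrite ?size_rcons //.
apply/and3P; split=> //; last by rewrite last_rcons.
by move: Pp; rewrite e cat_path rcons_path => /andP[-> /= /andP[-> _]].
Qed.

Lemma sp_le_widen avoid l l' x y (p : seq T) :
  sp_le E avoid l x y p -> size p <= l' -> sp_le E avoid l' x y p.
Proof. by case. Qed.

End SimplePaths.

Section UpperBoundGraph.
Variables (T : finType) (E : rel T) (s t : T) (k : nat).

Lemma SPGu_edge_of_path (p : seq T) y z :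
  spath E s t p -> size p <= k -> infix [:: y; z] (s :: p) ->
  SPGu_edge E s t k y z.
Proof.
move=> sp le_pk /infixP[a [b e]]; rewrite /= in e.
have e' : s :: p = rcons a y ++ z :: b by rewrite cat_rcons.
have [q [aq _ sp_q]] := sp_le_prefix sp e isT.
have sp_b : sp_le E s (size b) z t b by apply: sp_le_suffix sp e' _; case: (a).
split; first by case/and3P: (spath_suffix sp e) => /andP[].
exists (size a), (size b); split; [by exists q | by exists b | |].
  by rewrite -(size_split_edge e).
(* The EV* sets lie on the prefix and on the suffix of p, which are disjoint. *)
case=> w [/(_ q sp_q) w_q /(_ b sp_b) w_b].
case/and3P: sp => _ _; rewrite e' cat_uniq aq => /and3P[_ /hasPn/(_ w w_b)].
by rewrite w_q.
Qed.

Lemma definite_edge_near_s (p a : seq T) u v b :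
  spath E s t p -> size p <= k -> s :: p = a ++ u :: v :: b -> size a <= 1 ->
  definite_edge E s t k u v.
Proof.
move=> sp le_pk e le_a1.
have e' : s :: p = rcons a u ++ v :: b by rewrite cat_rcons.
have sp_b := sp_le_suffix sp e'.
have size_p := size_split_edge e.
split; first by case/and3P: (spath_suffix sp e) => /andP[].
case: a le_a1 e e' sp_b size_p => [|a0 [|//]] _ e e' /(_ isT) sp_b /= size_p.
  case: e => <- _; apply: Or41; split=> //.
  by exists b; apply: sp_le_widen sp_b _; lia.
have sp_bk : sp_le E s (k - 2) v t b by apply: sp_le_widen sp_b _; lia.
apply: Or43; split; last 1 first.
- move=> /(_ b sp_bk); apply/negP.
  by case/and3P: sp => _ _; rewrite e /= => /andP[_ /andP[]].
- by have [q [_ _ sp_q]] := sp_le_prefix sp e isT; exists q.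
- by exists b.
Qed.

Lemma definite_edge_near_t (p a : seq T) u v b :
  spath E s t p -> size p <= k -> s :: p = a ++ u :: v :: b -> size b <= 1 ->
  definite_edge E s t k u v.
Proof.
move=> sp le_pk e le_b1.
have e' : s :: p = rcons a u ++ v :: b by rewrite cat_rcons.
have [q [aq size_q sp_q]] := sp_le_prefix sp e isT.
have size_p := size_split_edge e.
split; first by case/and3P: (spath_suffix sp e) => /andP[].
case: b le_b1 e e' size_p => [|b0 [|//]] _ e e' /= size_p.
  have /and3P[_ /eqP v_t _] := spath_suffix sp e.
  by apply: Or42; split=> //; exists q; apply: sp_le_widen sp_q _; lia.
have sp_qk : sp_le E t (k - 2) s u q by apply: sp_le_widen sp_q _; lia.
apply: Or44; split; last 1 first.
- move=> /(_ q sp_qk); rewrite -aq; apply/negP.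
  case/and3P: sp => _ _; rewrite e' cat_uniq.
  by case/and3P=> _ /hasPn/(_ v (mem_head v _)).
- by exists [:: b0]; apply: sp_le_suffix sp e' _; case: (a).
- by exists q.
Qed.

Lemma inner_path_of_SPG_edge u v :
  SPG_edge E s t k u v -> ~ definite_edge E s t k u v ->
  exists a1 x r b1,
    [/\ spath E s t (a1 :: (x :: r) ++ [:: b1; t]),
         size (a1 :: (x :: r) ++ [:: b1; t]) <= k & infix [:: u; v] (x :: r)].
Proof.
case=> p [sp le_pk /infixP[a [b e]]] not_def; rewrite /= in e.
have [le_a1 | lt1a] := leqP (size a) 1.
  by case: not_def; apply: definite_edge_near_s sp le_pk e le_a1.
have [le_b1 | lt1b] := leqP (size b) 1.
  by case: not_def; apply: definite_edge_near_t sp le_pk e le_b1.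
case: a lt1a e => [|a0 [|a1 a]] //= _ [_ e].
case/lastP: b lt1b e => [|b1' b2] //; case/lastP: b1' => [|b' b1] // _.
rewrite -!cats1 -catA /= => e.
have [x [r xr]] : exists x r, a ++ u :: v :: b' = x :: r.
  by case: (a) => [|y a']; do 2 eexists.
have ep : p = a1 :: (x :: r) ++ [:: b1; b2] by rewrite e -xr -catA.
have b2_t : b2 = t.
  by case/and3P: sp => _ /eqP; rewrite ep /= last_cat.
have uv_r : infix [:: u; v] (x :: r) by apply/infixP; exists a, b'; rewrite -xr.
by subst b2; rewrite ep in sp le_pk; exists a1, x, r, b1.
Qed.

Section InnerPath.
Variables (a1 x : T) (r : seq T) (b1 : T).
Let p := a1 :: (x :: r) ++ [:: b1; t].
Hypotheses (sp : spath E s t p) (le_pk : size p <= k).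
Let U : uniq (s :: p). Proof. by case/and3P: sp. Qed.

Lemma InD_rel_of_inner_path : InD_rel E s t k x a1.
Proof.
have S_a1x : SPGu_edge E s t k a1 x.
  apply: SPGu_edge_of_path sp le_pk _; apply/infixP.
  by exists [:: s], (r ++ [:: b1; t]).
split; first exact: S_a1x.1.
split; last split=> //.
  apply/uniq_move_head/(subseq_uniq _ U); rewrite /p.
  apply: (cat_subseq (subseq_refl [:: s; a1; x])).
  by rewrite sub1seq mem_cat !inE eqxx !orbT.
apply: SPGu_edge_of_path sp le_pk _; apply/infixP.
by exists [::], ((x :: r) ++ [:: b1; t]).
Qed.

Lemma OutA_rel_of_inner_path : OutA_rel E s t k (last x r) b1.
Proof.
have ep : s :: p = (s :: a1 :: belast x r) ++ [:: last x r; b1; t].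
  by rewrite /p (lastI x r) cat_rcons.
have S_wb1 : SPGu_edge E s t k (last x r) b1.
  apply: SPGu_edge_of_path sp le_pk _; apply/infixP.
  by exists (s :: a1 :: belast x r), [:: t]; rewrite ep.
split; first exact: S_wb1.1.
split; last split=> //.
  apply/uniq_move_head/(subseq_uniq _ U); rewrite ep.
  exact: (cat_subseq (prefix_subseq [:: s] _) (subseq_refl _)).
apply: SPGu_edge_of_path sp le_pk _; apply/infixP.
by exists (s :: a1 :: x :: r), [::]; rewrite cats0.
Qed.

End InnerPath.

Definition witnessed_edge (hatIn : T -> {set T}) (u v : T) : Prop :=
  exists (x : T) (r : seq T),
     [/\ path E x r, uniq (x :: r), size r <= k - 4 &
         infix [:: u; v] (x :: r)] /\
     [/\ in_D E s t k x, in_A E s t k (last x r) &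
         exists v1 vl,
           [/\ v1 \in hatIn x, vl \in OutA E s t k (last x r) &
               uniq (s :: v1 :: (x :: r) ++ [:: vl; t])]].

Lemma witnessed_edge_of_SPG_edge (hatIn : T -> {set T}) u v :
  (forall w, in_D E s t k w -> trunc_subset (k - 2) (hatIn w) (InD E s t k w)) ->
  SPG_edge E s t k u v -> ~ definite_edge E s t k u v -> witnessed_edge hatIn u v.
Proof.
move=> hatP uv not_def.
have [a1 [x [r [b1 [sp le_pk uv_r]]]]] := inner_path_of_SPG_edge uv not_def.
have ID := InD_rel_of_inner_path sp le_pk.
have OA := OutA_rel_of_inner_path sp le_pk.
have Dx : in_D E s t k x by exists a1.
have U : uniq (s :: a1 :: (x :: r) ++ [:: b1; t]) by case/and3P: sp.
have a1_out : a1 \notin r ++ [:: b1].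
  move: U; set L := (x :: r) ++ _; rewrite !cons_uniq => /and3P[_ a1_L _].
  apply: contra a1_L; rewrite /L !mem_cat !inE => /orP[->|->]; by rewrite ?orbT.
have [v1 v1_hat v1_out] : exists2 v1, v1 \in hatIn x & v1 \notin r ++ [:: b1].
  apply: trunc_subset_avoid (hatP x Dx) _ a1_out _.
    by rewrite inE; apply/asboolP.
  by move: le_pk; rewrite /= !size_cat /=; lia.
have [_ [v1_xst _]] : InD_rel E s t k x v1.
  by have [/subsetP/(_ v1 v1_hat)] := hatP x Dx; rewrite inE => /asboolP.
have v1_out' : v1 \notin s :: (x :: r) ++ [:: b1; t].
  rewrite in_cons mem_cat !inE !negb_or.
  move: v1_xst v1_out; rewrite !cons_uniq mem_cat !inE !negb_or.
  by case/and5P => /and3P[-> -> ->] _ _ _ _ /andP[-> ->].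
exists x, r; split; split=> //.
- by case/and3P: sp => /= /andP[_ /andP[_]]; rewrite cat_path => /andP[].
- apply: subseq_uniq U; apply: subseq_trans (suffix_subseq [:: s; a1] _).
  exact: prefix_subseq.
- by move: le_pk; rewrite /= size_cat /=; lia.
- by exists b1.
exists v1, b1; split=> //; first by rewrite inE; apply/asboolP.
exact: uniq_replace_second U v1_out'.
Qed.

Lemma SPG_edge_of_witnessed_edge (hatIn : T -> {set T}) u v : 4 <= k ->
  (forall w, in_D E s t k w -> hatIn w \subset InD E s t k w) ->
  witnessed_edge hatIn u v -> SPG_edge E s t k u v.
Proof.
move=> le4k hat_sub [x [r [[Pr _ le_r /infixP[a [b e]]] [Dx _ wit]]]].
have [v1 [vl [v1_hat vl_out U]]] := wit.
have [E_v1x [_ [[E_sv1 _] _]]] : InD_rel E s t k x v1.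
  by move/subsetP: (hat_sub x Dx) => /(_ v1 v1_hat); rewrite inE => /asboolP.
have [E_wvl [_ [_ [E_vlt _]]]] : OutA_rel E s t k (last x r) vl.
  by move: vl_out; rewrite inE => /asboolP.
exists (v1 :: (x :: r) ++ [:: vl; t]); split.
- apply/and3P; split=> //; last by rewrite /= last_cat.
  by rewrite /= E_sv1 E_v1x cat_path Pr /= E_wvl E_vlt.
- by move: le_r; rewrite /= size_cat /=; lia.
- by apply/infixP; exists (s :: v1 :: a), (b ++ [:: vl; t]); rewrite e /= -!catA.
Qed.

End UpperBoundGraph.

Unset Implicit Arguments.

Theorem theorem5p8 (T : finType) (E : rel T) (s t : T) (k : nat)
    (hatIn : T -> {set T}) :
  s != t -> 5 <= k ->
  (forall w, in_D E s t k w ->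
     [/\ hatIn w \subset InD E s t k w,
         (k - 2 < #|InD E s t k w| -> #|hatIn w| = k - 2) &
         (#|InD E s t k w| <= k - 2 -> hatIn w = InD E s t k w)]) ->
  forall u v, undetermined_edge E s t k u v ->
  (SPG_edge E s t k u v <->
   exists (x : T) (r : seq T),
     [/\ path E x r, uniq (x :: r), size r <= k - 4 &
         infix [:: u; v] (x :: r)] /\
     [/\ in_D E s t k x, in_A E s t k (last x r) &
         exists v1 vl,
           [/\ v1 \in hatIn x, vl \in OutA E s t k (last x r) &
               uniq (s :: v1 :: (x :: r) ++ [:: vl; t])]]).
Proof.
move=> _ le5k hatP u v [_ not_def]; split=> [uv | ].
  exact: witnessed_edge_of_SPG_edge hatP uv not_def.
by apply: SPG_edge_of_witnessed_edge (ltnW le5k) _ => w /hatP[].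
Qed.
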